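(* Fix $0<p<1$ and let $\Delta\ge \frac{-\ln\left(1-\sqrt[n]{p}\right)}{\lambda}$. Then in the $\mathrm{EDD}(\lambda)$ model with a global clock, the probability that a run of the protocol $\mathrm{CORE}(\Delta)$ is correct is at least $p$.
   Context: Agents $i_0,i_1,\ldots,i_n$ share an accurate global clock and are connected by a complete reliable network; the delay of each message is an independent exponential random variable with parameter $\lambda$. At time $0$ the supervisor $i_0$ receives an external input. Protocol $\mathrm{CORE}(\Delta)$: at time $0$, $i_0$ sends a ''trigger'' message to each of $i_1,\ldots,i_n$; upon receiving the trigger, agent $i_k$ waits until the global time is at least $\Delta$ and then performs its action $\alpha_k$ (acting immediately if the trigger arrives after time $\Delta$). Letting $t_k$ be the time at which $i_k$ performs $\alpha_k$, a run is correct if $t_1\le t_2\le\cdots\le t_n<\infty$. *)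

From HB Require Import structures.
From mathcomp Require Import all_boot all_order all_algebra.
From mathcomp Require Import all_classical all_reals all_analysis.
Set Implicit Arguments. Unset Strict Implicit. Unset Printing Implicit Defensive.
Import Order.TTheory GRing.Theory Num.Theory.
Local Open Scope classical_set_scope.
Local Open Scope ring_scope.

Definition mutually_independent d (T : measurableType d) (R : realType)
    (P : probability T R) (n : nat) (X : 'I_n -> {RV P >-> R}) : Prop :=
  forall (S : {set 'I_n}) (B : 'I_n -> set R),
    (forall i, measurable (B i)) ->
    P (\bigcap_(i in [set` S]) (X i @^-1` B i)) =
      (\prod_(i in S) P (X i @^-1` B i))%E.

Definition exponentially_distributed d (T : measurableType d) (R : realType)
    (P : probability T R) (lam : R) (X : {RV P >-> R}) : Prop :=
  forall A : set R, measurable A -> distribution P X A = exponential_prob lam A.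

(* Protocol CORE(Delta): agent i_(k+1) (k : 'I_n) receives the trigger at time
   D k (the delay of the message sent by i_0 at time 0) and acts at time
   max(Delta, D k). *)
Definition core_action_time (R : realType) (n : nat) (Delta : R)
    (D : 'I_n -> R) (k : 'I_n) : R :=
  Num.max Delta (D k).

(* A run is correct iff t_1 <= t_2 <= ... <= t_n < oo.  Times are real
   numbers here, so finiteness is automatic. *)
Definition core_correct (R : realType) (n : nat) (Delta : R)
    (D : 'I_n -> R) : Prop :=
  forall i j : 'I_n, (i <= j)%N ->
    core_action_time Delta D i <= core_action_time Delta D j.

From HB Require Import structures.
From mathcomp Require Import all_boot all_order all_algebra.
From mathcomp Require Import all_classical all_reals all_analysis.
From mathcomp Require Import lra.
Import Order.TTheory GRing.Theory Num.Theory.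
Local Open Scope classical_set_scope.
Local Open Scope ring_scope.

(* If every trigger arrives by time Delta, every agent acts exactly at Delta,
   so the run is correct.  By independence, all n exponential delays are at
   most Delta with probability (1 - exp(-lam Delta))^n, and since Delta is at
   least the p^(1/n)-quantile of Exp(lam), each factor is at least p^(1/n). *)

Lemma powRVnK (R : realType) (n : nat) (a : R) :
  (0 < n)%N -> 0 <= a -> (a `^ n%:R^-1) ^+ n = a.
Proof.
move=> n_gt0 a_ge0.
by rewrite -powR_mulrn ?powR_ge0// -powRrM mulVf ?pnatr_eq0 -?lt0n// powRr1.
Qed.

Lemma exponential_quantile_gt0 (R : realType) (lam q : R) :
  0 < lam -> 0 < q < 1 -> 0 < - ln (1 - q) / lam.
Proof.
move=> lam_gt0 /andP[q_gt0 q_lt1]; apply: divr_gt0 => //.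
by rewrite oppr_gt0; apply: ln_lt0; apply/andP; split; lra.
Qed.

Lemma exponential_cdf_ge_of_quantile_le (R : realType) (lam q Delta : R) :
  0 < lam -> q < 1 ->
  - ln (1 - q) / lam <= Delta -> q <= 1 - expR (- lam * Delta).
Proof.
move=> lam_gt0 q_lt1; rewrite ler_pdivrMr // => quantile_le.
suff : expR (- lam * Delta) <= 1 - q by lra.
rewrite -[leRHS]lnK ?posrE ?ler_expR; lra.
Qed.

Section core_deterministic.
Variables (R : realType) (n : nat) (Delta : R) (D : 'I_n -> R).

Lemma core_action_time_early (k : 'I_n) :
  D k <= Delta -> core_action_time Delta D k = Delta.
Proof. by move/max_idPl. Qed.

Lemma core_correct_early : (forall k, D k <= Delta) -> core_correct Delta D.
Proof. by move=> early i j _; rewrite !core_action_time_early. Qed.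

End core_deterministic.

Lemma measurable_core_correct d (T : measurableType d) (R : realType) (n : nat)
    (Delta : R) (D : 'I_n -> T -> R) :
  (forall k, measurable_fun setT (D k)) ->
  measurable [set w | core_correct Delta (fun k => D k w)].
Proof.
move=> mD.
have mact k : measurable_fun setT (fun w => core_action_time Delta (D^~ w) k).
  by apply: measurable_realfun.measurable_maxr => //; exact: measurable_cst.
have -> : [set w | core_correct Delta (fun k => D k w)] =
    \bigcap_(i in [set: 'I_n]) \bigcap_(j in [set j : 'I_n | (i <= j)%N])
      ((fun w => core_action_time Delta (D^~ w) i <=
                 core_action_time Delta (D^~ w) j) @^-1` [set true]).
  apply/seteqP; split => [w correct i _ j /= ij|w correct i j ij].
    exact: correct.
  exact: (correct i I j ij).
apply: fin_bigcap_measurable => [|i _]; first exact: finite_finset.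
apply: fin_bigcap_measurable => [|j _]; first exact: finite_finset.
rewrite -[X in measurable X]setTI.
exact: measurable_realfun.measurable_fun_ler.
Qed.

Section independent_exponentials.
Context {d} {T : measurableType d} {R : realType} (P : probability T R).
Context (lam : R) {Delta : R}.
Hypothesis Delta_gt0 : 0 < Delta.

Lemma prob_exponential_itv0c (X : {RV P >-> R}) :
  exponentially_distributed lam X ->
  P (X @^-1` `[0, Delta]) = (1 - expR (- lam * Delta))%:E.
Proof.
move=> /(_ _ (measurable_itv `[0, Delta])).
by rewrite /distribution /pushforward /= => ->; rewrite exponential_prob_itv0c.
Qed.

Lemma prob_independent_exponentials_itv0c (n : nat) (X : 'I_n -> {RV P >-> R}) :
  mutually_independent X -> (forall k, exponentially_distributed lam (X k)) ->
  P (\bigcap_(k in [set` [set: 'I_n]%SET]) X k @^-1` `[0, Delta]) =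
    ((1 - expR (- lam * Delta)) ^+ n)%:E.
Proof.
move=> indep expX.
rewrite (indep [set: 'I_n]%SET (fun=> `[0, Delta]%classic)) => [|_]; last first.
  exact: measurable_itv.
rewrite (eq_bigr _ (fun k _ => prob_exponential_itv0c _ (expX k))).
by rewrite prodEFin prodr_const cardsT card_ord.
Qed.

End independent_exponentials.

Theorem corollary2 (d : measure_display) (T : measurableType d) (R : realType)
    (P : probability T R) (n : nat) (lam p Delta : R)
    (D : 'I_n -> {RV P >-> R}) :
  (0 < n)%N -> 0 < lam -> 0 < p < 1 ->
  mutually_independent D ->
  (forall k, exponentially_distributed lam (D k)) ->
  - ln (1 - p `^ (n%:R)^-1) / lam <= Delta ->
  (p%:E <= P [set w | core_correct Delta (fun k => D k w)])%E.
Proof.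
move=> n_gt0 lam_gt0 /andP[p_gt0 p_lt1] indep expD.
set q := p `^ (n%:R)^-1 => quantile_le.
have qn : q ^+ n = p by rewrite powRVnK // ltW.
have q_gt0 : 0 < q by exact: powR_gt0.
have q_lt1 : q < 1 by rewrite -(expr_lt1 n_gt0 (ltW q_gt0)) qn.
have Delta_gt0 : 0 < Delta.
  by apply: lt_le_trans quantile_le; apply: exponential_quantile_gt0 => //; lra.
have cdf_ge : q <= 1 - expR (- lam * Delta).
  exact: exponential_cdf_ge_of_quantile_le quantile_le.
apply: (@le_trans _ _ (P (\bigcap_(k in [set` [set: 'I_n]%SET])
                            D k @^-1` `[0, Delta]))).
  rewrite (prob_independent_exponentials_itv0c P lam Delta_gt0 _ _ indep expD).
  rewrite lee_fin -qn.
  by apply: lerXn2r; rewrite ?nnegrE ?(ltW q_gt0) //; lra.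
apply: le_measure; rewrite ?inE.
- apply: fin_bigcap_measurable => [|k _]; first exact: finite_finset.
  by rewrite -[X in measurable X]setTI; exact: measurable_funPT.
- exact/measurable_core_correct/(fun k => measurable_funPT (D k)).
move=> w early; apply: core_correct_early => k.
by have := early k; rewrite /= inE in_itv /= => /(_ isT) /andP[].
Qed.
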